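(* Let $V=\{1,\dots,n\}$ and let $W=(w_1,\dots,w_m)\in V^m$ be a sequence such that each element of $V$ appears in $W$ at least once and any three consecutive elements of $W$ are distinct. Then the set of 3-cycles $\mathcal{C}=\{(w_{i-1}\ w_i\ w_{i+1}) : 1<i<m\}$ can generate any even permutation of $V$ in $O(n^3)$ shifts; that is, there is an absolute constant $K$ (independent of $m$ and $W$) such that every even permutation of $V$ is a product of at most $Kn^3$ factors, each being an element of $\mathcal{C}$ or the inverse of one.
   Context: Permutations are written in cycle notation; $(x\ y\ z)$ denotes the 3-cycle sending $x\mapsto y\mapsto z\mapsto x$. *)

From mathcomp Require Import all_boot all_fingroup.
Set Implicit Arguments. Unset Strict Implicit. Unset Printing Implicit Defensive.

(* V = {1,...,n} is represented by 'I_n.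
   In mathcomp, (s * t) x = t (s x).  The 3-cycle (x y z), sending
   x |-> y |-> z |-> x, is tperm x y * tperm x z for distinct x, y, z:
   x -> y -> y ; y -> x -> z ; z -> z -> x. *)
Definition cycle3 (T : finType) (x y z : T) : {perm T} :=
  (tperm x y * tperm x z)%g.

Definition covers (n : nat) (W : seq 'I_n) : Prop :=
  forall v : 'I_n, v \in W.

(* Any three consecutive entries of W are pairwise distinct
   (the default x0 is irrelevant since indices are in range). *)
Definition three_consec_distinct (n : nat) (W : seq 'I_n) : Prop :=
  forall (x0 : 'I_n) (i : nat), i.+2 < size W ->
    uniq [:: nth x0 W i; nth x0 W i.+1; nth x0 W i.+2].

(* c belongs to C = {(w_{i-1} w_i w_{i+1}) : 1 < i < m} or is the inverse of one
   (0-based: triples at positions i, i+1, i+2 with i+2 < m). *)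
Definition shift_or_inv (n : nat) (W : seq 'I_n) (c : {perm 'I_n}) : Prop :=
  exists (x0 : 'I_n) (i : nat), i.+2 < size W /\
    let s := cycle3 (nth x0 W i) (nth x0 W i.+1) (nth x0 W i.+2) in
    (c = s \/ c = s^-1)%g.

From mathcomp Require Import all_boot all_fingroup.
From mathcomp Require alt.
From mathcomp Require Import zify.

Set Implicit Arguments. Unset Strict Implicit. Unset Printing Implicit Defensive.

(* Induct on W from the right. Shifts of W move only letters of W and are
   even. Let p be even, supported on the letters of [rcons W x], with x a
   new letter moved by p, and put y = p x (products act left to right:
   (p * h) v = h (p v)). Walking y along W one shift at a time brings it to
   one of the last two entries a, b of W in at most #|W| steps, and one or
   two applications of the shift (a b x) then bring it to x. For this h,
   p * h fixes x, so by induction it is a product of k (k + 2) shifts of W,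
   k = #|W|, whence p = (p * h) * h^-1 needs at most (k + 1) (k + 3).
   When W has a single letter, p would be a transposition, which is odd. *)

Section Words.
Variables (gT : finGroupType) (P : gT -> Prop).

Definition word (L : nat) (g : gT) : Prop :=
  exists s : seq gT,
    [/\ size s <= L, (forall c, c \in s -> P c) & g = (\prod_(c <- s) c)%g].

Lemma word1 L : word L 1%g.
Proof. by exists [::]; split => //; rewrite big_nil. Qed.

Lemma word_gen c : P c -> word 1 c.
Proof.
move=> Pc; exists [:: c]; split => // [d|]; first by rewrite inE => /eqP ->.
by rewrite big_seq1.
Qed.

Lemma word_leq L1 L2 g : L1 <= L2 -> word L1 g -> word L2 g.
Proof.
by move=> le12 [s [size_s Ps ->]]; exists s; split => //; apply: leq_trans le12.
Qed.

Lemma wordM L1 L2 g h : word L1 g -> word L2 h -> word (L1 + L2) (g * h)%g.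
Proof.
move=> [s [size_s Ps ->]] [t [size_t Pt ->]]; exists (s ++ t); split.
- by rewrite size_cat leq_add.
- by move=> c; rewrite mem_cat => /orP[/Ps | /Pt].
- by rewrite big_cat.
Qed.

Lemma wordV L g : (forall c, P c -> P c^-1%g) -> word L g -> word L g^-1%g.
Proof.
move=> PV [s [size_s Ps ->]]; apply: word_leq size_s _.
elim: s Ps => [|c s IHs] Ps; first by rewrite big_nil invg1; apply: word1.
rewrite big_cons invMg /= -addn1; apply: wordM.
  by apply: IHs => d sd; apply: Ps; rewrite inE sd orbT.
by apply/word_gen/PV/Ps; rewrite mem_head.
Qed.

Lemma word_group (H : {group gT}) L g :
  (forall c, P c -> c \in H) -> word L g -> g \in H.
Proof.
move=> PH [s [_ Ps ->]]; rewrite big_seq; apply: group_prod => c sc.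
exact/PH/Ps.
Qed.

End Words.

Lemma sub_word (gT : finGroupType) (P Q : gT -> Prop) L g :
  (forall c, P c -> Q c) -> word P L g -> word Q L g.
Proof. by move=> PQ [s [size_s Ps ->]]; exists s; split => // c /Ps /PQ. Qed.

Section Permutations.
Variable T : finType.
Implicit Types (x y z : T) (S : {set T}) (p : {perm T}).

Lemma cycle3_xy x y z : uniq [:: x; y; z] -> cycle3 x y z x = y.
Proof.
rewrite /= !inE negb_or => /andP[/andP[xy _] /andP[yz _]].
by rewrite /cycle3 permM tpermL tpermD // eq_sym.
Qed.

Lemma cycle3_yz x y z : cycle3 x y z y = z.
Proof. by rewrite /cycle3 permM tpermR tpermL. Qed.

Lemma odd_cycle3 x y z : x != y -> x != z -> odd_perm (cycle3 x y z) = false.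
Proof. by move=> xy xz; rewrite odd_permM !odd_tperm xy xz. Qed.

Lemma tperm_on_sub S x y : x \in S -> y \in S -> perm_on S (tperm x y).
Proof.
move=> Sx Sy; apply: subset_trans (tperm_on x y) _.
by apply/subsetP => v; rewrite !inE => /orP[] /eqP ->.
Qed.

Lemma cycle3_on S x y z :
  x \in S -> y \in S -> z \in S -> perm_on S (cycle3 x y z).
Proof. by move=> Sx Sy Sz; apply: perm_onM; apply: tperm_on_sub. Qed.

Lemma perm_on_setD1 S x p : perm_on S p -> p x = x -> perm_on (S :\ x) p.
Proof.
move=> /subsetP p_on px; apply/subsetP => v pv; rewrite !inE p_on // andbT.
by apply: contraNneq pv => ->; rewrite px.
Qed.

Lemma odd_perm_on_card2 S p : perm_on S p -> #|S| <= 2 -> p != 1%g -> odd_perm p.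
Proof.
move=> p_on cardS p_ne1.
have [x px] : exists x, p x != x.
  case: (pickP (fun x => p x != x)) => [x px | fixp]; first by exists x.
  by case/eqP: p_ne1; apply/permP => v; rewrite perm1; apply/eqP/negbFE/fixp.
have Sx : x \in S by apply: (subsetP p_on); rewrite inE.
have Spx : p x \in S by rewrite perm_closed.
set t := tperm x (p x).
have /perm_on_id pt1 : perm_on (S :\ x) (p * t)%g.
  by apply: perm_on_setD1; [apply/perm_onM/tperm_on_sub | rewrite permM tpermR].
have -> : p = t.
  by rewrite -(mulgK t p) pt1 ?mul1g ?tpermV // -ltnS -add1n; rewrite (cardsD1 x) Sx in cardS.
by rewrite odd_tperm eq_sym.
Qed.

End Permutations.

Lemma nth_rcons3 (T : Type) (x0 a b c : T) (s : seq T)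
    (s3 := rcons (rcons (rcons s a) b) c) :
  [/\ nth x0 s3 (size s) = a, nth x0 s3 (size s).+1 = b
    & nth x0 s3 (size s).+2 = c].
Proof.
rewrite /s3 -!cats1 -!catA /= !nth_cat ltnn subnn !ltnNge leqnSn.
by rewrite (leq_trans (leqnSn _) (leqnSn _)) /= subSnn subSn ?subSnn.
Qed.

Section Sequences.
Variable T : finType.
Implicit Types (x : T) (s : seq T).

Lemma card_cons x s : #|x :: s| = (x \notin s) + #|s|.
Proof. by rewrite -cardU1; apply: eq_card => v; rewrite !inE. Qed.

Lemma card_rcons x s : #|rcons s x| = (x \notin s) + #|s|.
Proof. by rewrite -card_cons; apply: eq_card => v; rewrite mem_rcons. Qed.

Lemma set_rcons x s : [set:: rcons s x] = x |: [set:: s].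
Proof. by apply/setP => v; rewrite !inE mem_rcons inE. Qed.
End Sequences.

Section Shifts.
Variable n : nat.
Implicit Types (W : seq 'I_n) (c g : {perm 'I_n}).

Lemma shift_or_invV W c : shift_or_inv W c -> shift_or_inv W c^-1%g.
Proof.
move=> [x0 [i [ltiW c_shift]]]; exists x0, i; split => //.
by case: c_shift => ->; [right | left; rewrite invgK].
Qed.

Lemma shift_or_inv_cons u W c : shift_or_inv W c -> shift_or_inv (u :: W) c.
Proof. by move=> [x0 [i [ltiW c_shift]]]; exists x0, i.+1. Qed.

Lemma shift_or_inv_rcons x W c : shift_or_inv W c -> shift_or_inv (rcons W x) c.
Proof.
move=> [x0 [i [ltiW c_shift]]]; exists x0, i; rewrite size_rcons !nth_rcons.
by rewrite ltiW !(ltn_trans _ ltiW) //; split; first exact: ltnW.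
Qed.

Lemma shift_or_inv_last3 W (a b c : 'I_n) :
  shift_or_inv (rcons (rcons (rcons W a) b) c) (cycle3 a b c).
Proof.
have [Ea Eb Ec] := nth_rcons3 a a b c W.
by exists a, (size W); rewrite Ea Eb Ec !size_rcons; split; last left.
Qed.

Lemma three_consec_distinct_cons u W :
  three_consec_distinct (u :: W) -> three_consec_distinct W.
Proof. by move=> tcd x0 i ltiW; apply: (tcd x0 i.+1). Qed.

Lemma three_consec_distinct_rcons x W :
  three_consec_distinct (rcons W x) -> three_consec_distinct W.
Proof.
move=> tcd x0 i ltiW; have := tcd x0 i; rewrite size_rcons !nth_rcons.
by rewrite ltiW !(ltn_trans _ ltiW) //; apply; apply: ltnW.
Qed.

Lemma three_consec_distinct_last3 W (a b c : 'I_n) :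
  three_consec_distinct (rcons (rcons (rcons W a) b) c) -> uniq [:: a; b; c].
Proof.
have [Ea Eb Ec] := nth_rcons3 a a b c W.
by move=> /(_ a (size W)); rewrite Ea Eb Ec !size_rcons; apply.
Qed.

Lemma shift_or_inv_on W c : shift_or_inv W c -> perm_on [set:: W] c.
Proof.
move=> [x0 [i [ltiW c_shift]]].
have memW k : k < size W -> nth x0 W k \in [set:: W] by rewrite inE; apply: mem_nth.
have c3_on := cycle3_on (memW _ (ltnW (ltnW ltiW))) (memW _ (ltnW ltiW)) (memW _ ltiW).
by case: c_shift => ->; last apply: perm_onV.
Qed.

Lemma shift_or_inv_even W c :
  three_consec_distinct W -> shift_or_inv W c -> ~~ odd_perm c.
Proof.
move=> tcd [x0 [i [ltiW c_shift]]].
have /and3P[] := tcd x0 i ltiW; rewrite !inE negb_or => /andP[xy xz] _ _.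
by case: c_shift => ->; rewrite ?odd_permV odd_cycle3.
Qed.

Lemma word_shift_on W L g : word (shift_or_inv W) L g -> perm_on [set:: W] g.
Proof.
move=> /(word_group (H := Sym_group [set:: W])); rewrite inE; apply => c.
by move=> /shift_or_inv_on; rewrite inE.
Qed.

Lemma word_shift_even W L g :
  three_consec_distinct W -> word (shift_or_inv W) L g -> ~~ odd_perm g.
Proof.
move=> tcd /(word_group (H := alt.Alt_group _)); rewrite alt.Alt_even; apply => c.
by rewrite alt.Alt_even; apply: shift_or_inv_even.
Qed.

End Shifts.

Section Walks.
Variable n : nat.
Implicit Types (W : seq 'I_n) (x y a b : 'I_n).

Lemma shift_word_to_end W a b y :
  three_consec_distinct (rcons (rcons W a) b) -> y \in rcons (rcons W a) b ->
  exists2 h, word (shift_or_inv (rcons (rcons W a) b)) #|W| h & h y \in [:: a; b].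
Proof.
elim: W y => [|u W IHW] y /= tcd yW; first by exists 1%g; [apply: word1 | rewrite perm1].
set W2 := rcons (rcons W a) b in tcd yW *.
have lift L h : word (shift_or_inv W2) L h -> word (shift_or_inv (u :: W2)) L h.
  exact/sub_word/shift_or_inv_cons.
have [yW2 | yNW2] := boolP (y \in W2).
  have [h wh hy] := IHW y (three_consec_distinct_cons tcd) yW2.
  by exists h => //; apply/lift/(word_leq _ wh); rewrite card_cons leq_addl.
move: yW; rewrite inE (negbTE yNW2) orbF => /eqP yu; subst y.
set w1 := nth a W2 0; set w2 := nth a W2 1.
have size_W2 : 2 <= size W2 by rewrite !size_rcons.
have u_w1_w2 : uniq [:: u; w1; w2] by apply: (tcd a 0); rewrite /= ltnS.
have [h wh hw1] := IHW w1 (three_consec_distinct_cons tcd) (mem_nth _ (ltnW size_W2)).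
exists (cycle3 u w1 w2 * h)%g; last by rewrite permM cycle3_xy.
have uNW : u \notin W.
  by apply: contra yNW2 => uW; rewrite /W2 !(mem_rcons, inE) uW !orbT.
rewrite card_cons uNW add1n -add1n; apply: wordM (lift _ _ wh).
by apply: word_gen; exists a, 0; split; [rewrite /= ltnS | left].
Qed.

Lemma shift_word_to_last W x y :
  three_consec_distinct (rcons W x) -> 1 < size W -> y \in W ->
  exists2 h, word (shift_or_inv (rcons W x)) #|W|.+2 h & h y = x.
Proof.
case/lastP: W => [|W b] //; case/lastP: W => [|W a] // tcd _ yW.
have [h0 wh0 h0y] := shift_word_to_end (three_consec_distinct_rcons tcd) yW.
have {}wh0 : word (shift_or_inv (rcons (rcons (rcons W a) b) x)) #|W| h0.
  by apply: sub_word wh0 => c; apply: shift_or_inv_rcons.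
have wc := word_gen (shift_or_inv_last3 W a b x).
have abx := three_consec_distinct_last3 tcd.
have leW : #|W| <= #|rcons (rcons W a) b| by rewrite !card_rcons addnA leq_addl.
move: h0y; rewrite !inE => /orP[] /eqP h0y.
  exists (h0 * cycle3 a b x * cycle3 a b x)%g.
    by apply: word_leq (wordM (wordM wh0 wc) wc); rewrite !addn1 !ltnS.
  by rewrite (permM (h0 * _)) (permM h0) h0y (cycle3_xy abx) cycle3_yz.
exists (h0 * cycle3 a b x)%g; last by rewrite permM h0y cycle3_yz.
by apply: word_leq (wordM wh0 wc); rewrite addn1 !ltnS (leq_trans leW).
Qed.

End Walks.

Lemma even_perm_on_word n (W : seq 'I_n) (p : {perm 'I_n}) :
  three_consec_distinct W -> ~~ odd_perm p -> perm_on [set:: W] p ->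
  word (shift_or_inv W) (#|W| * #|W|.+2) p.
Proof.
elim/last_ind: W p => [|W x IHW] p tcd p_even p_on.
  by rewrite (perm_on_id p_on) ?set_nil ?cards0 //; exact: word1.
have tcdW := three_consec_distinct_rcons tcd.
have lift L h : word (shift_or_inv W) L h -> word (shift_or_inv (rcons W x)) L h.
  exact/sub_word/shift_or_inv_rcons.
rewrite set_rcons in p_on; rewrite card_rcons.
have [xW | xNW] := boolP (x \in W).
  apply/lift/IHW => //; move: p_on.
  by have /setUidPr -> : [set x] \subset [set:: W] by rewrite sub1set inE.
have xNS : x \notin [set:: W] by rewrite inE.
have [px | pxNx] := eqVneq (p x) x.
  apply/lift/(word_leq _ (IHW p tcdW p_even _)).
    by rewrite add1n; apply: leq_mul.
  by rewrite -(setU1K xNS); apply: perm_on_setD1.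
have pxS : p x \in [set:: W].
  have := perm_closed x p_on; rewrite setU11 => /setU1P[pxx | //].
  by rewrite pxx eqxx in pxNx.
have [h wh hpx] : exists2 h, word (shift_or_inv (rcons W x)) #|W|.+2 h & h (p x) = x.
  have [W2 | W1] := ltnP 1 (size W).
    by apply: shift_word_to_last => //; rewrite inE in pxS.
  case/negP: p_even; apply: (odd_perm_on_card2 p_on).
    by rewrite cardsU1 xNS add1n ltnS cardsE (leq_trans (card_size W)).
  by apply: contra_neq pxNx => ->; rewrite perm1.
have q_on : perm_on [set:: W] (p * h)%g.
  rewrite -(setU1K xNS); apply: perm_on_setD1; last by rewrite permM.
  by apply: perm_onM p_on _; rewrite -set_rcons; apply: word_shift_on wh.
have q_even : ~~ odd_perm (p * h)%g.
  by rewrite odd_permM (negbTE p_even) (negbTE (word_shift_even tcd wh)).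
have wq := lift _ _ (IHW _ tcdW q_even q_on).
have wh' := wordV (@shift_or_invV _ _) wh.
rewrite -(mulgK h p); apply: word_leq (wordM wq wh').
by rewrite add1n addnC -mulSn leq_mul2l leqnSn orbT.
Qed.

Theorem lemma4 :
  exists K : nat, forall (n : nat) (W : seq 'I_n),
    covers W -> three_consec_distinct W ->
    forall p : {perm 'I_n}, ~~ odd_perm p ->
      exists s : seq {perm 'I_n},
        [/\ size s <= K * n ^ 3,
            (forall c, c \in s -> shift_or_inv W c)
          & p = (\prod_(c <- s) c)%g].
Proof.
exists 3 => n W covW tcd p p_even.
have p_on : perm_on [set:: W] p by apply/subsetP => v _; rewrite inE covW.
apply: word_leq (even_perm_on_word tcd p_even p_on).
have le_Wn : #|W| <= n by rewrite -[n in _ <= n]card_ord max_card.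
have le_W2n : #|W|.+2 <= n.+2 by rewrite !ltnS.
apply: leq_trans (leq_mul le_Wn le_W2n) _.
case: n {W covW tcd p p_even p_on le_Wn le_W2n} => // n.
rewrite !expnS expn0 muln1; nia.
Qed.
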